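(* Let $C$ be a connected $2$-dimensional unoriented resolution configuration, and let $F_C: V_0(C)\to V_1(C)$ be a non-zero associated map of bidegree $(2,4)$ such that the assignment $C\mapsto F_C$ satisfies the naturality rule, the disoriented rule, the filtration rule and the duality rule. Then $C$ is a tree or a dual tree (i.e. $F_C$ would have to be zero otherwise), and: if $C$ is a tree with starting circles $x_1,x_2,x_3$ and ending circle $y$, then $F_C(x_1x_2x_3)=y$ and $F_C$ vanishes on all other monomials; if $C$ is a dual tree with starting circle $x$ and ending circles $y_1,y_2,y_3$, then $F_C(1)=1\otimes1\otimes1$ and $F_C(x)=0$.
   Context: A $k$-dimensional resolution configuration $C$ is a finite set of pairwise disjoint embedded circles $x_1,\dots,x_t$ in $S^2$ together with $k$ embedded arcs $\gamma_1,\dots,\gamma_k$ which are pairwise disjoint, whose endpoints lie on the circles and whose interiors are disjoint from the circles. It is oriented if the arcs are oriented, and unoriented otherwise. The circles $x_i$ are the starting circles; the ending circles $y_1,\dots,y_s$ are obtained from the starting circles by performing surgery along all arcs. The dual configuration $C^*$ consists of the ending circles together with the dual arcs $\gamma_i^*$ obtained by rotating $\gamma_i$ by $90$ degrees counterclockwise (so the starting circles of $C^*$ are the ending circles of $C$ and vice versa). Writing $S^2=\mathbb{R}^2\cup\{\infty\}$, the mirror $m(C)$ is the reflection of $C$ in $\mathbb{R}\times\{0\}$. $C$ is connected if the graph whose vertices are the circles and whose edges are the arcs is connected. A connected $k$-dimensional configuration is a tree if it has exactly $k+1$ starting circles and one ending circle; a dual tree is the dual of a tree (one starting circle, $k+1$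 ending circles). Set $V_0(C)=\bigotimes_{i=1}^t\mathbb{F}_2[x_i]/(x_i^2)$ and $V_1(C)=\bigotimes_{j=1}^s\mathbb{F}_2[y_j]/(y_j^2)$, with basis of monomials (products of circle variables). Quantum grading: in each factor $\mathrm{gr}_q(1)=1$, $\mathrm{gr}_q(x)=-1$, added over tensor factors; for a $k$-dimensional configuration the quantum grading of monomials of $V_1(C)$ is additionally shifted up by $k$. A linear map $F_C:V_0(C)\to V_1(C)$ for a $k$-dimensional $C$ has bidegree $(k,p)$ if it sends each monomial to a linear combination of monomials whose quantum grading exceeds that of the source by $p$. Rules for an assignment $C\mapsto F_C$: (Naturality) if an orientation-preserving diffeomorphism of $S^2$ sends $C$ to $C'$, then $F_C=F_{C'}$ under the induced identifications $V_0(C)=V_0(C')$, $V_1(C)=V_1(C')$. (Disoriented) if $C,C'$ differ only in the orientations of arcs, $F_C=F_{C'}$. (Duality) using the canonical identifications $V_0(m(C^* ))=V_1(C)$ and $V_1(m(C^* ))=V_0(C)$ and the involution $a\mapsto a^*$ on monomials induced by $1^*=z$, $z^*=1$ in each factor $\mathbb{F}_2[z]/(z^2)$, for all monomials $a\in V_0(C)$, $b\in V_1(C)$ the coefficient of $b$ in $F_C(a)$ equals the coefficient of $a^*$ in $F_{m(C^* )}(b^* )$. (Filtration) for a point $P$ on the starting circles, let $x(P)$, $y(P)$ be the starting and ending circles containing $P$; if a monomial $a$ is divisible by $x(P)$ and the coefficient of a monomial $b$ in $F_C(a)$ is non-zero, then $b$ is divisible by $y(P)$. *)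

(* Combinatorial model of connected 2-dimensional
   unoriented resolution configurations via rotation systems. *)
From mathcomp Require Import all_boot all_order all_fingroup all_algebra.
Set Implicit Arguments. Unset Strict Implicit. Unset Printing Implicit Defensive.

(* The union of circles and arcs of a connected 2-dimensional configuration is
   a planar graph with 4 trivalent vertices (the arc endpoints), hence 12 darts
   (half-edges). *)
Notation dart := 'I_12.

(* A configuration (raw data):
   - [alpha] : the edge involution (the other end of the same edge),
   - [sigma] : the rotation at a vertex (next dart counterclockwise),
   - [arc]   : the darts that are (halves of) arcs; the other darts are
               (halves of) circle segments. *)
Record rconf := RConf {
  alpha : dart -> dart;
  sigma : dart -> dart;
  arc : {set dart}
}.

Definition sigmaV (C : rconf) (d : dart) : dart := sigma C (sigma C d).

Definition adj (C : rconf) : rel dart :=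
  [rel x y | (y == alpha C x) || (y == sigma C x)].

Definition face_perm (C : rconf) (d : dart) : dart := sigma C (alpha C d).

Definition nfaces (C : rconf) : nat :=
  #|[set [set e | fconnect (face_perm C) d e] | d : dart]|.

(* Validity: a connected planar (genus 0, Euler: 4 - 6 + 4 = 2) embedded
   trivalent graph, each vertex being an arc endpoint carrying exactly one arc
   dart and two circle darts. *)
Definition valid (C : rconf) : Prop :=
  (forall d, alpha C (alpha C d) = d /\ alpha C d != d) /\
  [/\ forall d, sigma C (sigma C (sigma C d)) = d /\ sigma C d != d,
      forall d, ((d \in arc C) + (sigma C d \in arc C)
                 + (sigma C (sigma C d) \in arc C))%N = 1%N,
      forall d, (alpha C d \in arc C) = (d \in arc C),
      forall x y, connect (adj C) x y
    & nfaces C = 4%N].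

Definition other (C : rconf) (e : dart) : dart :=
  if sigma C e \in arc C then sigmaV C e else sigma C e.

(* successor of a circle dart along the surgered (ending) circles *)
Definition tau (C : rconf) (e : dart) : dart :=
  let f := alpha C e in
  if sigma C f \in arc C then sigma C (alpha C (sigma C f))
  else sigmaV C (alpha C (sigmaV C f)).

Definition srel (C : rconf) : rel dart :=
  [rel x y | (y == alpha C x) || (y == other C x)].
Definition erel (C : rconf) : rel dart :=
  [rel x y | (y == alpha C x) || (y == tau C x)].

(* A circle is represented by the set of circle darts lying on it. *)
Definition startcirc (C : rconf) (e : dart) : {set dart} :=
  [set x | connect (srel C) e x].
Definition endcirc (C : rconf) (e : dart) : {set dart} :=
  [set x | connect (erel C) e x].

Definition startC (C : rconf) : {set {set dart}} :=
  [set startcirc C e | e in ~: arc C].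
Definition endC (C : rconf) : {set {set dart}} :=
  [set endcirc C e | e in ~: arc C].

(* mirror: reverse the rotation *)
Definition mirror (C : rconf) : rconf := RConf (alpha C) (sigmaV C) (arc C).

(* dual configuration: the dual vertex attached to the arc dart a sits on the
   copy of the arc lying in the corner (sigma^-1 a, a); its darts are a (the
   dual arc), sigma^-1 a and sigma (alpha a) (ending-circle darts). *)
Definition dual_sigma (C : rconf) (d : dart) : dart :=
  if d \in arc C then sigmaV C d
  else if sigma C d \in arc C then sigma C (alpha C (sigma C d))
  else alpha C (sigmaV C d).

Definition dualc (C : rconf) : rconf := RConf (alpha C) (dual_sigma C) (arc C).

(* Monomials of V_0(C) (resp. V_1(C)) are subsets of startC C (resp. endC C);
   an assignment gives, for each configuration C and monomials a, b, the
   coefficient (in F_2) of b in F_C(a). *)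
Definition assignment := rconf -> {set {set dart}} -> {set {set dart}} -> bool.

(* orientation-preserving diffeomorphisms = isomorphisms of rotation systems *)
Definition iso (C C' : rconf) (p : {perm dart}) : Prop :=
  forall d, [/\ p (alpha C d) = alpha C' (p d),
               p (sigma C d) = sigma C' (p d)
             & (p d \in arc C') = (d \in arc C)].

Definition imgS (p : {perm dart}) (A : {set {set dart}}) : {set {set dart}} :=
  [set (p @: X : {set dart}) | X : {set dart} in A].

Definition naturality (F : assignment) : Prop :=
  forall C C' p, valid C -> valid C' -> iso C C' p ->
  forall a b : {set {set dart}}, a \subset startC C -> b \subset endC C ->
    F C a b = F C' (imgS p a) (imgS p b).

(* a^star = complement monomial; V_0(m(dual C)) = V_1(C) and
   V_1(m(dual C)) = V_0(C): as sets of circles (sets of darts), these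
   identifications are literal equalities in this model. *)
Definition duality (F : assignment) : Prop :=
  forall C, valid C ->
  forall a b : {set {set dart}}, a \subset startC C -> b \subset endC C ->
    F C a b = F (mirror (dualc C)) (endC C :\: b) (startC C :\: a).

(* a point P on a starting circle, in the interior of the circle segment of
   the circle dart e *)
Definition filtration (F : assignment) : Prop :=
  forall C, valid C ->
  forall (a b : {set {set dart}}) e, a \subset startC C -> b \subset endC C -> e \notin arc C ->
    startcirc C e \in a -> F C a b -> endcirc C e \in b.

Local Open Scope ring_scope.
Definition qgr0 (C : rconf) (a : {set {set dart}}) : int :=
  (#|startC C|%:Z - (2 * #|a|)%:Z).
(* shifted up by k = 2 *)
Definition qgr1 (C : rconf) (b : {set {set dart}}) : int :=
  (#|endC C|%:Z - (2 * #|b|)%:Z + 2).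
Local Close Scope ring_scope.

Definition bidegree24 (F : assignment) (C : rconf) : Prop :=
  forall a b : {set {set dart}}, a \subset startC C -> b \subset endC C -> F C a b ->
    qgr1 C b = (qgr0 C a + 4)%R.

Definition nonzero_at (F : assignment) (C : rconf) : Prop :=
  exists a b : {set {set dart}}, [/\ a \subset startC C, b \subset endC C & F C a b].

Definition is_tree (C : rconf) : bool := (#|startC C| == 3) && (#|endC C| == 1).
Definition is_dual_tree (C : rconf) : bool := (#|startC C| == 1) && (#|endC C| == 3).

From mathcomp Require Import all_boot all_order all_fingroup all_algebra.
From mathcomp Require Import zify.
From Stdlib Require Import FunctionalExtensionality.
Set Implicit Arguments. Unset Strict Implicit. Unset Printing Implicit Defensive.

(* The grading rule says that F_C raises the quantum grading by 4, i.e.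
   #ending + 2|a| = #starting + 2|b| + 2 whenever b occurs in F_C(a).  The
   filtration rule says that a non-empty monomial a can only hit non-empty
   monomials b, and that the product of all starting circles can only hit the
   product of all ending circles.  Together with the Euler characteristic bound
   #starting + #ending <= k + 2 = 4 for connected configurations, this leaves
   exactly two possibilities: a tree with (a, b) = (x1 x2 x3, y), or a dual tree
   with (a, b) = (1, 1).

   The bound on the number of circles is checked exhaustively: relabelling the
   darts puts the rotation and the two arcs of any valid configuration in a
   fixed position, and only the 105 pairings of the 8 circle darts remain. *)

Definition frel2 (T : eqType) (f g : T -> T) : rel T :=
  [rel x y | (y == f x) || (y == g x)].

Lemma connect_homo (T T' : finType) (r : rel T) (r' : rel T') (h : T -> T') :
  (forall u v, r u v -> r' (h u) (h v)) ->
  forall u v, connect r u v -> connect r' (h u) (h v).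
Proof.
move=> hr u v /connectP[p + ->]; elim: p u => [|z p IH] u /=; first by rewrite connect0.
by case/andP=> /hr/connect1 ruz /IH; apply: connect_trans.
Qed.

Lemma card_classes_le (T : finType) (r : rel T) (D : {pred T}) (s : seq T) :
  (forall e, e \in D -> exists2 y, y \in s & connect r e y && connect r y e) ->
  #|[set [set x | connect r e x] | e in D]| <= size s.
Proof.
move=> hD; pose rclass y := [set x | connect r y x].
have sub : [set [set x | connect r e x] | e in D] \subset [set X in map rclass s].
  apply/subsetP=> _ /imsetP[e /hD[y ys /andP[ey ye]] ->].
  have -> : [set x | connect r e x] = rclass y.
    by apply/setP=> x; rewrite !inE; apply/idP/idP; apply: connect_trans.
  by rewrite inE map_f.
by rewrite -(size_map rclass) (leq_trans (subset_leq_card sub)) // cardsE card_size.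
Qed.

(** * Rotation systems in normal form *)

Definition dart_of (n : nat) : dart := Ordinal (ltn_pmod n (isT : 0 < 12)).
Definition darts : seq dart := [seq dart_of i | i <- iota 0 12].

Lemma mem_darts (x : dart) : x \in darts.
Proof.
apply/mapP; exists (val x); first by rewrite mem_iota /= ltn_ord.
by apply: val_inj; rewrite /= modn_small.
Qed.

Lemma forall_dart (P : pred dart) : all P darts -> forall x, P x.
Proof. by move/allP=> hP x; apply: hP (mem_darts x). Qed.

(* In the normal form, darts 3i, 3i+1, 3i+2 form the i-th vertex in
   counterclockwise order, the arc dart 3i first, and the arcs join 0 to 3 and
   6 to 9. *)
Definition std_arc (d : dart) : bool := d %% 3 == 0.
Definition std_sigma (d : dart) : dart :=
  dart_of (if d %% 3 == 2 then d - 2 else d.+1).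

Lemma std_sigma_div x : std_sigma x %/ 3 = x %/ 3.
Proof. by apply/eqP; move: x; apply: forall_dart. Qed.

Lemma std_sigma_mod x : std_sigma x %% 3 = (x %% 3).+1 %% 3.
Proof. by apply/eqP; move: x; apply: forall_dart. Qed.

Definition std_other (e : dart) : dart :=
  if std_arc (std_sigma e) then std_sigma (std_sigma e) else std_sigma e.
Definition std_tau (a : dart -> dart) (e : dart) : dart :=
  let f := a e in
  if std_arc (std_sigma f) then std_sigma (a (std_sigma f))
  else std_sigma (std_sigma (a (std_sigma (std_sigma f)))).

Definition std_alpha (a : dart -> dart) : Prop :=
  [/\ involutive a, forall x, a x != x, forall x, std_arc (a x) = std_arc x,
      a (dart_of 0) = dart_of 3 & a (dart_of 6) = dart_of 9].

Definition circle_darts : seq dart := [seq d <- darts | ~~ std_arc d].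

Section ValidConfiguration.
Variable C : rconf.
Hypothesis vC : valid C.
Local Notation s := (sigma C).
Local Notation al := (alpha C).

Lemma alphaK : involutive al.
Proof. by case: vC => H _ d; case: (H d). Qed.

Lemma alpha_neq d : al d != d.
Proof. by case: vC => H _; case: (H d). Qed.

Lemma sigma3 d : s (s (s d)) = d.
Proof. by case: vC => _ [H _ _ _ _]; case: (H d). Qed.

Lemma arc_alpha d : (al d \in arc C) = (d \in arc C).
Proof. by case: vC => _ [_ _ H _ _]. Qed.

Lemma arc_count_at_vertex d :
  ((d \in arc C) + (s d \in arc C) + (s (s d) \in arc C))%N = 1%N.
Proof. by case: vC => _ [_ H _ _ _]. Qed.

Lemma connect_adj x y : connect (adj C) x y.
Proof. by case: vC => _ [_ _ _ H _]. Qed.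

Lemma iter_sigma_mod n d : iter (n %% 3) s d = iter n s d.
Proof.
rewrite {2}(divn_eq n 3) iterD iterM [in RHS]iter_fix //; exact: sigma3.
Qed.

Lemma arc_iter_sigma a n : a \in arc C -> (iter n s a \in arc C) = (n %% 3 == 0).
Proof.
move=> aC; have := arc_count_at_vertex a; rewrite aC -iter_sigma_mod.
have := ltn_mod n 3; case: (n %% 3) => [|[|[|//]]] _ /=; first by rewrite aC.
all: by case: (s a \in arc C); case: (s (s a) \in arc C).
Qed.

Lemma iter_sigma_arc_inj a a' j j' : a \in arc C -> a' \in arc C ->
  j < 3 -> j' < 3 -> iter j s a = iter j' s a' -> a = a' /\ j = j'.
Proof.
move=> aC a'C lt_j3 lt_j'3 eq_ij.
have a_eq : a = iter (3 - j + j') s a'.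
  by rewrite iterD -eq_ij -iterD (subnK (ltnW lt_j3)) /= sigma3.
have j_eq : j = j'.
  by have := arc_iter_sigma (3 - j + j') a'C; rewrite -a_eq aC => /esym/eqP; lia.
by split=> //; rewrite a_eq -j_eq (subnK (ltnW lt_j3)) /= sigma3.
Qed.

Lemma arc_at_vertex d : exists2 a, a \in arc C & d \in [:: a; s a; s (s a)].
Proof.
have := arc_count_at_vertex d.
case dC: (d \in arc C); first by exists d; rewrite ?mem_head.
case sdC: (s d \in arc C) => /=.
  by exists (s d) => //; rewrite -{1}(sigma3 d) !inE eqxx !orbT.
case ssdC: (s (s d) \in arc C) => // _.
by exists (s (s d)); rewrite // sigma3 !inE eqxx orbT.
Qed.

Lemma four_arc_darts :
  exists a0 a2, [/\ a0 \in arc C, a2 \in arc C & uniq [:: a0; al a0; a2; al a2]].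
Proof.
have [a0 a0C _] := arc_at_vertex ord0.
have [a2 a2C] : exists2 a2, a2 \in arc C & a2 \notin [:: a0; al a0].
  case: (pickP [pred a2 | (a2 \in arc C) && (a2 \notin [:: a0; al a0])]).
    by move=> a2 /andP[]; exists a2.
  move=> no_arc.
  suff: #|dart| <= size [:: a0; s a0; s (s a0); al a0; s (al a0); s (s (al a0))].
    by rewrite card_ord.
  apply/(leq_trans _ (card_size _))/subset_leq_card/subsetP => d _.
  have [a aC da] := arc_at_vertex d; have := no_arc a; rewrite /= aC => /negbFE.
  by rewrite !inE => /orP[] /eqP ea; move: da; rewrite ea !inE => /or3P[] ->; rewrite ?orbT.
rewrite !inE negb_or => /andP[n20 n21]; exists a0, a2; split=> //.
rewrite /= !inE !negb_or (inj_eq (can_inj alphaK)) [a0 == al a2]eq_sym.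
rewrite (can2_eq alphaK alphaK a2) ![_ == a2]eq_sym n20 n21 [a0 == _]eq_sym.
by rewrite [a2 == _]eq_sym !alpha_neq.
Qed.

Lemma normal_form : exists Q : {perm dart},
  [/\ forall x, Q (std_sigma x) = s (Q x), forall x, (Q x \in arc C) = std_arc x,
      al (Q (dart_of 0)) = Q (dart_of 3) & al (Q (dart_of 6)) = Q (dart_of 9)].
Proof.
have [a0 [a2 [a0C a2C uniq_l]]] := four_arc_darts.
pose l := [:: a0; al a0; a2; al a2].
have l_arc i : nth a0 l i \in arc C.
  by case: i => [|[|[|[|i]]]] //=; rewrite ?arc_alpha // nth_nil.
pose q (x : dart) := iter (x %% 3) s (nth a0 l (x %/ 3)).
have q_inj : injective q.
  move=> x y /iter_sigma_arc_inj[] //; rewrite ?ltn_mod // => /eqP.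
  rewrite nth_uniq ?ltn_divLR // => /eqP xy_div xy_mod.
  by apply: val_inj; rewrite /= (divn_eq x 3) (divn_eq y 3) xy_div xy_mod.
exists (perm q_inj); split=> [x|x||]; rewrite !permE //.
- by rewrite /q std_sigma_div std_sigma_mod iter_sigma_mod.
- by rewrite arc_iter_sigma // modn_mod.
Qed.

Lemma std_model : exists (Q : {perm dart}) (a : dart -> dart),
  [/\ std_alpha a, forall x, (Q x \in arc C) = std_arc x,
      forall u v, frel2 a std_other u v -> srel C (Q u) (Q v),
      forall u v, frel2 a (std_tau a) u v -> erel C (Q u) (Q v)
    & connect (frel2 a std_sigma) (dart_of 0) (dart_of 6)].
Proof.
have [Q [Qs Qarc Q0 Q6]] := normal_form.
pose a x := (Q^-1)%g (al (Q x)).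
have Qal x : al (Q x) = Q (a x) by rewrite /a permKV.
have Qother u : Q (std_other u) = other C (Q u).
  by rewrite /std_other /other /sigmaV -!Qs Qarc; case: ifP.
have Qtau u : Q (std_tau a u) = tau C (Q u).
  by rewrite /std_tau /tau /sigmaV; do 4 rewrite ?Qal -?Qs ?Qarc; case: ifP.
exists Q, a; split=> [||u v|u v|].
- split=> [x|x|x||]; rewrite /a ?Q0 ?Q6 ?permK //.
  + by rewrite permKV alphaK permK.
  + by apply: contra (alpha_neq (Q x)) => /eqP/(congr1 Q); rewrite permKV => ->.
  + by rewrite -Qarc permKV arc_alpha Qarc.
- exact: Qarc.
- by case/orP=> /eqP ->; rewrite /srel /= ?Qal ?Qother eqxx ?orbT.
- by case/orP=> /eqP ->; rewrite /erel /= ?Qal ?Qtau eqxx ?orbT.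
- have adj_std u v : adj C u v -> frel2 a std_sigma ((Q^-1)%g u) ((Q^-1)%g v).
    case/orP=> /eqP ->; rewrite /frel2 /=; first by rewrite /a permKV eqxx.
    suff -> : (Q^-1)%g (s u) = std_sigma ((Q^-1)%g u) by rewrite eqxx orbT.
    by apply: (@perm_inj _ Q); rewrite Qs !permKV.
  have := connect_homo adj_std (connect_adj (Q (dart_of 0)) (Q (dart_of 6))).
  by rewrite !permK.
Qed.

Lemma startC_gt0 : 0 < #|startC C|.
Proof.
have [a aC _] := arc_at_vertex ord0; rewrite card_gt0; apply/set0Pn.
exists (startcirc C (s a)); apply: imset_f; rewrite inE.
by have /= -> := arc_iter_sigma 1 aC.
Qed.

End ValidConfiguration.

(** * Exhaustive count of the circles *)

Fixpoint reachn (n : nat) (f g : dart -> dart) (L : seq dart) : seq dart :=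
  if n is n'.+1 then
    let L' := undup (L ++ map f L ++ map g L) in
    if size L' == size L then L else reachn n' f g L'
  else L.
Definition reach (f g : dart -> dart) (e : dart) : seq dart := reachn 12 f g [:: e].

Lemma reachn_sub n f g L : {subset L <= reachn n f g L}.
Proof.
elim: n L => [|n IH] L x xL //=; case: ifP => // _.
by apply: IH; rewrite mem_undup mem_cat xL.
Qed.

Lemma reach_self f g e : e \in reach f g e.
Proof. exact/reachn_sub/mem_head. Qed.

Lemma reach_connect f g e y : y \in reach f g e -> connect (frel2 f g) e y.
Proof.
suff: forall n L, {subset L <= connect (frel2 f g) e} ->
    {subset reachn n f g L <= connect (frel2 f g) e}.
  by apply=> z; rewrite inE => /eqP ->; apply: connect0.
elim=> [|n IH] L HL //=; case: ifP => // _; apply: IH => z.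
rewrite mem_undup !mem_cat => /orP[/HL //|/orP[]] /mapP[w /HL ew ->];
  by apply: connect_trans ew (connect1 _); rewrite /frel2 /= eqxx ?orbT.
Qed.

Definition closed2 (f g : dart -> dart) (R : seq dart) : bool :=
  all (fun x => (f x \in R) && (g x \in R)) R.

Lemma closed2_connect f g R x y :
  closed2 f g R -> x \in R -> connect (frel2 f g) x y -> y \in R.
Proof.
move=> /allP clR xR /connectP[p pth ->]; elim: p x xR pth => //= z p IH x xR.
case/andP=> xz /IH; apply; have /andP[fxR gxR] := clR x xR.
by case/orP: xz => /eqP ->.
Qed.

Definition class_rep (f g : dart -> dart) (e : dart) : dart :=
  let R := reach f g e in head e [seq x <- darts | x \in R].
Definition class_reps_ok (f g : dart -> dart) : bool :=
  all (fun e => let r := class_rep f g e in (r \in reach f g e) && (e \in reach f g r))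
    circle_darts.
Definition nclasses (f g : dart -> dart) : nat :=
  size (undup [seq class_rep f g e | e <- circle_darts]).

Lemma card_circles_le (C : rconf) (Q : {perm dart}) (f g : dart -> dart) (r : rel dart) :
  (forall x, (Q x \in arc C) = std_arc x) -> (forall u v, frel2 f g u v -> r (Q u) (Q v)) ->
  class_reps_ok f g -> #|[set [set x | connect r e x] | e in ~: arc C]| <= nclasses f g.
Proof.
move=> Qarc Qr /allP ok; rewrite /nclasses -(size_map Q); apply: card_classes_le => e.
rewrite inE => eC; pose e' := (Q^-1)%g e.
have e'C : e' \in circle_darts by rewrite mem_filter mem_darts andbT -Qarc permKV.
have /andP[rep_in e_in] := ok e' e'C.
exists (Q (class_rep f g e')); first by rewrite map_f // mem_undup map_f.
have := connect_homo Qr (reach_connect rep_in).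
have := connect_homo Qr (reach_connect e_in).
by rewrite permKV => -> ->.
Qed.

Definition circle_count_ok (a : dart -> dart) : bool :=
  [&& nclasses a std_other + nclasses a (std_tau a) <= 4,
      class_reps_ok a std_other & class_reps_ok a (std_tau a)].

(* Only soundness of [reach] is proved, so the check itself certifies that the
   component of dart 0 is closed and that the representatives are mutually
   reachable. *)
Definition std_check (a : dart -> dart) : bool :=
  let R := reach a std_sigma (dart_of 0) in
  closed2 a std_sigma R && ((dart_of 6 \in R) ==> circle_count_ok a).

Fixpoint pairing (ps : seq (dart * dart)) (x : dart) : dart :=
  if ps is p :: ps' then if p.1 == x then p.2 else pairing ps' x else x.

Definition admissible (k v : dart) (ps : seq (dart * dart)) : bool :=
  [&& ~~ std_arc v, v != k
    & all (fun p => (v != p.2) && ((p.2 == k) == (v == p.1))) ps].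

(* Enumerates the fixed-point-free involutions of the darts [ks] extending the
   partial pairing [ps].  The guard is an [if] rather than [==>], which
   [vm_compute] would evaluate eagerly, defeating the pruning. *)
Fixpoint all_pairings (P : pred (dart -> dart)) (ks : seq dart)
    (ps : seq (dart * dart)) : bool :=
  if ks is k :: ks' then
    all (fun v => if admissible k v ps then all_pairings P ks' ((k, v) :: ps) else true)
      darts
  else P (pairing ps).

Definition std_arc_pairs : seq (dart * dart) :=
  [:: (dart_of 0, dart_of 3); (dart_of 3, dart_of 0);
      (dart_of 6, dart_of 9); (dart_of 9, dart_of 6)].

Lemma std_check_pairings : all_pairings std_check circle_darts std_arc_pairs.
Proof. by vm_compute. Qed.

Lemma uniq_circle_darts : uniq circle_darts.
Proof. by []. Qed.

Lemma circle_darts_unpaired :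
  all (fun k => ~~ std_arc k && (k \notin unzip1 std_arc_pairs)) circle_darts.
Proof. by []. Qed.

Lemma circle_darts_cover x : (x \in circle_darts) || (x \in unzip1 std_arc_pairs).
Proof. by move: x; apply: forall_dart. Qed.

Section StandardAlpha.
Variable a : dart -> dart.
Hypothesis std_a : std_alpha a.

Let aK : involutive a. Proof. by case: std_a. Qed.

Lemma pairing_eq (ps : seq (dart * dart)) x :
  (forall p, p \in ps -> a p.1 = p.2) -> x \in unzip1 ps -> pairing ps x = a x.
Proof.
elim: ps => //= p ps IH aps; rewrite inE eq_sym.
case: eqP => [<- _|_ /= xps]; first by rewrite aps ?mem_head.
by apply: IH xps => q qps; rewrite aps // inE qps orbT.
Qed.

Lemma admissible_alpha k (ps : seq (dart * dart)) :
  ~~ std_arc k -> k \notin unzip1 ps -> (forall p, p \in ps -> a p.1 = p.2) ->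
  admissible k (a k) ps.
Proof.
case: std_a => _ a_neq a_arc _ _ kC kps aps; rewrite /admissible a_arc kC a_neq /=.
apply/allP=> p pps; rewrite -(aps p pps) (inj_eq (can_inj aK)) (can2_eq aK aK p.1).
rewrite [p.1 == _]eq_sym eqxx andbT; apply: contraNneq kps => ->; exact: map_f.
Qed.

Lemma all_pairingsP (P : pred (dart -> dart)) ks ps :
  uniq ks -> all (fun k => ~~ std_arc k && (k \notin unzip1 ps)) ks ->
  (forall p, p \in ps -> a p.1 = p.2) -> (forall x, (x \in ks) || (x \in unzip1 ps)) ->
  all_pairings P ks ps -> P a.
Proof.
elim: ks ps => [|k ks IH] ps uks ksC aps cover.
  by rewrite /= (functional_extensionality _ _ (fun x => pairing_eq aps (cover x))).
case/andP: uks => kks uks; case/andP: ksC => /andP[kC kps] ksC.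
move=> /allP /(_ (a k) (mem_darts _)); rewrite admissible_alpha //.
apply: IH uks _ _ _ => [|p|x].
- apply/allP=> j jks; have /andP[-> jps] := allP ksC j jks.
  by rewrite inE /= negb_or jps andbT; apply: contraNneq kks => <-.
- by rewrite in_cons => /orP[/eqP -> //|]; apply: aps.
- by move: (cover x); rewrite !inE /=; case: (x == k); case: (x \in ks).
Qed.

Lemma std_circle_count :
  connect (frel2 a std_sigma) (dart_of 0) (dart_of 6) -> circle_count_ok a.
Proof.
move=> conn06; have aps p : p \in std_arc_pairs -> a p.1 = p.2.
  case: std_a => _ _ _ a0 a6.
  by rewrite !inE => /or4P[] /eqP ->; rewrite /= ?a0 ?a6 -?a0 -?a6 ?aK.
have := all_pairingsP uniq_circle_darts circle_darts_unpaired aps circle_darts_cover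
  std_check_pairings.
rewrite /std_check => /andP[closedR].
by rewrite (closed2_connect closedR (reach_self _ _ _) conn06).
Qed.

End StandardAlpha.

Lemma circles_bound C : valid C -> #|startC C| + #|endC C| <= 4.
Proof.
move=> vC; have [Q [a [std_a Qarc Qs Qe conn]]] := std_model vC.
have /and3P[le4 ok_s ok_e] := std_circle_count std_a conn.
apply: leq_trans le4; apply: leq_add.
  exact: card_circles_le Qarc Qs ok_s.
exact: card_circles_le Qarc Qe ok_e.
Qed.

(** * Grading and filtration *)

Section Support.
Variables (F : assignment) (C : rconf) (a b : {set {set dart}}).
Hypotheses (filtF : filtration F) (vC : valid C).
Hypotheses (sa : a \subset startC C) (sb : b \subset endC C) (Fab : F C a b).

Lemma filtration_nonempty : 0 < #|a| -> 0 < #|b|.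
Proof.
rewrite !card_gt0 => /set0Pn[_ /[dup] /(subsetP sa)/imsetP[e eC ->] ea].
by apply/set0Pn; exists (endcirc C e); apply: filtF Fab; rewrite // inE in eC.
Qed.

Lemma filtration_full : a = startC C -> b = endC C.
Proof.
move=> ea; apply/eqP; rewrite eqEsubset sb; apply/subsetP=> _ /imsetP[e eC ->].
by apply: filtF Fab; rewrite // ?ea ?imset_f //; rewrite inE in eC.
Qed.

Lemma support_shape : bidegree24 F C ->
  [/\ is_tree C || is_dual_tree C,
      is_tree C -> a = startC C /\ b = endC C
    & is_dual_tree C -> a = set0 /\ b = set0].
Proof.
move=> /(_ a b sa sb Fab); rewrite /qgr0 /qgr1 => grading.
have bound := circles_bound vC; have pos := startC_gt0 vC.
have le_a := subset_leq_card sa; have le_b := subset_leq_card sb.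
rewrite /is_tree /is_dual_tree; case: (posnP #|a|) => [a0|a_pos].
  have [-> -> b0] : [/\ #|startC C| = 1, #|endC C| = 3 & #|b| = 0] by split; lia.
  by rewrite (cards0_eq a0) (cards0_eq b0).
have b_pos := filtration_nonempty a_pos.
have a_full : a = startC C by apply/eqP; rewrite eqEcard sa; lia.
have b_full := filtration_full a_full.
have [-> ->] : #|startC C| = 3 /\ #|endC C| = 1.
  by move: grading; rewrite -{1}a_full -{1}b_full; split; lia.
by [].
Qed.

End Support.

Theorem lemma3p1 (F : assignment) (C : rconf) :
  naturality F -> duality F -> filtration F ->
  valid C -> bidegree24 F C -> nonzero_at F C ->
  [/\ is_tree C || is_dual_tree C,
      is_tree C -> forall a b : {set {set dart}}, a \subset startC C -> b \subset endC C ->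
        F C a b = (a == startC C) && (b == endC C)
    & is_dual_tree C -> forall a b : {set {set dart}}, a \subset startC C -> b \subset endC C ->
        F C a b = (a == set0) && (b == set0)].
Proof.
move=> _ _ filtF vC gradF [a0 [b0 [sa0 sb0 Fab0]]].
have shape a b sa sb Fab := @support_shape F C a b filtF vC sa sb Fab gradF.
have [tree_or_dual a0_tree a0_dual] := shape a0 b0 sa0 sb0 Fab0.
split=> // [tC|dC] a b sa sb; apply/idP/andP=> [Fab|[/eqP-> /eqP->]].
- by have [_ /(_ tC)[-> ->] _] := shape a b sa sb Fab; rewrite !eqxx.
- by have [ea0 eb0] := a0_tree tC; move: Fab0; rewrite ea0 eb0.
- by have [_ _ /(_ dC)[-> ->]] := shape a b sa sb Fab; rewrite !eqxx.
- by have [ea0 eb0] := a0_dual dC; move: Fab0; rewrite ea0 eb0.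
Qed.
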